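(* Let $\Omega\subset\mathbb{Z}_2^n\setminus\{\mathbf 0\}$ be nonempty and such that every $\beta\in\Omega$ has even Hamming weight. Then the transition matrix $H_\Omega(t)$ of $\mathrm{NEPS}(P_3,\ldots,P_3;\Omega)$ satisfies $H_\Omega(\pi)=I$; in particular the graph is periodic at $\pi$.
   Context: $P_3$ is the path on three vertices. For graphs $G_1,\dots,G_n$ and $\Omega\subset\mathbb{Z}_2^n\setminus\{\mathbf 0\}$, $\mathrm{NEPS}(G_1,\dots,G_n;\Omega)$ is the graph on $V(G_1)\times\cdots\times V(G_n)$ with adjacency matrix $\sum_{\beta\in\Omega}A_1^{\beta_1}\otimes\cdots\otimes A_n^{\beta_n}$, $A_i$ the adjacency matrix of $G_i$. The Hamming weight of $\beta$ is its number of entries equal to $1$. The transition matrix of a graph with adjacency matrix $A$ is $H(t)=\exp(-itA)$; a graph is periodic at $\tau\ne0$ if $H(\tau)=\gamma I$ with $|\gamma|=1$. *)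

From Stdlib Require Import Reals Factorial.
From mathcomp Require Import all_boot.
Set Implicit Arguments. Unset Strict Implicit. Unset Printing Implicit Defensive.

Definition adjmx (T : finType) := T -> T -> nat.

Definition P3_adj : adjmx 'I_3 :=
  fun i j => nat_of_bool (((i : nat).+1 == j) || ((j : nat).+1 == i)).

(* A^0 = I, A^1 = A (beta_i in {0,1}). *)
Definition adj_pow01 (T : finType) (A : adjmx T) (b : bool) : adjmx T :=
  fun u v => if b then A u v else nat_of_bool (u == v).

Definition hamming_weight (n : nat) (beta : {ffun 'I_n -> bool}) : nat :=
  #|[set i | beta i]|.

(* Adjacency matrix of NEPS(G,...,G; Omega) (n copies of G with adjacency A),
   on vertex set V(G)^n: entry (u,v) of
   sum_{beta in Omega} A^{beta_1} (x) ... (x) A^{beta_n}. *)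
Definition neps_adj (n : nat) (T : finType) (A : adjmx T)
  (Om : {set {ffun 'I_n -> bool}}) : adjmx {ffun 'I_n -> T} :=
  fun u v => (\sum_(beta in Om) \prod_(i < n) adj_pow01 A (beta i) (u i) (v i))%N.

Fixpoint mxpow (T : finType) (A : adjmx T) (k : nat) : adjmx T :=
  match k with
  | 0 => fun u v => nat_of_bool (u == v)
  | k'.+1 => fun u v => (\sum_(w : T) mxpow A k' u w * A w v)%N
  end.

Local Open Scope R_scope.

(* Complex numbers as (Re, Im) pairs of reals. *)
Definition C := (R * R)%type.
Definition Cmul (z w : C) : C :=
  (Rminus (Rmult (fst z) (fst w)) (Rmult (snd z) (snd w)),
   Rplus (Rmult (fst z) (snd w)) (Rmult (snd z) (fst w))).
Definition Cnorm2 (z : C) : R := Rplus (Rmult (fst z) (fst z)) (Rmult (snd z) (snd z)).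

Fixpoint negi_pow (k : nat) : C :=
  match k with
  | 0 => (R1, R0)
  | k'.+1 => Cmul (R0, Ropp R1) (negi_pow k')
  end.

(* k-th term of the entry (u,v) of exp(-itA) = sum_k (-itA)^k / k!,
   i.e. (-i)^k * t^k * (A^k)_{uv} / k!. *)
Definition exp_term (T : finType) (A : adjmx T) (t : R) (u v : T) (k : nat) : C :=
  Cmul (negi_pow k) (Rdiv (Rmult (pow t k) (INR (mxpow A k u v))) (INR (fact k)), R0).

(* transition_entry A t u v z : the (u,v) entry of H(t) = exp(-itA) equals z,
   i.e. the exponential series converges (componentwise) to z. *)
Definition transition_entry (T : finType) (A : adjmx T) (t : R) (u v : T) (z : C) : Prop :=
  Un_cv (fun N => sum_f_R0 (fun k => fst (exp_term A t u v k)) N) (fst z) /\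
  Un_cv (fun N => sum_f_R0 (fun k => snd (exp_term A t u v k)) N) (snd z).

Definition transition_is_scalar (T : finType) (A : adjmx T) (t : R) (gamma : C) : Prop :=
  forall u v : T, transition_entry A t u v
    (Cmul gamma (INR (nat_of_bool (u == v)), R0)).

Definition periodic_at (T : finType) (A : adjmx T) (tau : R) : Prop :=
  tau <> R0 /\ exists gamma : C, Cnorm2 gamma = R1 /\ transition_is_scalar A tau gamma.

(* P3 has the orthonormal eigenbasis (1/2, s/2, 1/2), (s/2, 0, -s/2), (1/2, -s/2, 1/2) with
   eigenvalues s, 0, -s, where s = sqrt 2.  Tensor products of these vectors form an
   orthonormal eigenbasis of NEPS(P3, ..., P3; Om), the eigenvalue of the product indexed by
   J being the sum over beta in Om of the products of the eigenvalues of J at the positions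
   where beta is 1.  Such a product is s ^ |beta| times an integer, an even integer when
   |beta| is even and positive.  Hence every eigenvalue lambda is an even integer, so
   exp(-i pi lambda) = 1 and H(pi) = sum_J x_J x_J^T = I. *)

From Pilot Require Import Defs.
From Stdlib Require Import Reals.
From mathcomp Require Import all_boot all_algebra zify ring lra Rstruct.
Import GRing.Theory Num.Theory.
Set Implicit Arguments. Unset Strict Implicit. Unset Printing Implicit Defensive.
Local Open Scope ring_scope.

Lemma CmulE (z w : Defs.C) : Cmul z w = (z.1 * w.1 - z.2 * w.2, z.1 * w.2 + z.2 * w.1).
Proof. by rewrite /Cmul !RealsE. Qed.

Lemma negi_powS k : negi_pow k.+1 = Cmul (0, -1) (negi_pow k).
Proof. by []. Qed.

Lemma negi_pow_double m : negi_pow m.*2 = ((-1) ^+ m, 0).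
Proof.
elim: m => [|m IH]; first by rewrite expr0.
by rewrite doubleS !negi_powS IH !CmulE /= exprS; congr pair; ring.
Qed.

Lemma negi_pow_doubleS m : negi_pow m.*2.+1 = (0, - (-1) ^+ m).
Proof. by rewrite negi_powS negi_pow_double CmulE /=; congr pair; ring. Qed.

(* Real and imaginary parts of the k-th term (-i x)^k / k! of the series of exp(-i x). *)
Definition expmi_re (x : R) (k : nat) := (negi_pow k).1 * (x ^+ k / k`!%:R).
Definition expmi_im (x : R) (k : nat) := (negi_pow k).2 * (x ^+ k / k`!%:R).

Lemma IZRN1 : IZR (-1) = -1 :> R. Proof. by []. Qed.

Lemma cos_nE m : cos_n m = (-1) ^+ m / (m.*2)`!%:R.
Proof. by rewrite /cos_n !RealsE IZRN1 -mul2n. Qed.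

Lemma sin_nE m : sin_n m = (-1) ^+ m / (m.*2.+1)`!%:R.
Proof.
by rewrite /sin_n !RealsE IZRN1 (_ : ((2 * m)%coq_nat + 1)%coq_nat = m.*2.+1) //; lia.
Qed.

Lemma expmi_re_double x m : expmi_re x m.*2 = cos_n m * (x ^+ 2) ^+ m.
Proof. by rewrite /expmi_re negi_pow_double cos_nE -exprM mul2n /=; ring. Qed.

Lemma expmi_re_doubleS x m : expmi_re x m.*2.+1 = 0.
Proof. by rewrite /expmi_re negi_pow_doubleS mul0r. Qed.

Lemma expmi_im_double x m : expmi_im x m.*2 = 0.
Proof. by rewrite /expmi_im negi_pow_double mul0r. Qed.

Lemma expmi_im_doubleS x m : expmi_im x m.*2.+1 = - x * (sin_n m * (x ^+ 2) ^+ m).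
Proof. by rewrite /expmi_im negi_pow_doubleS sin_nE -exprM mul2n exprS /=; ring. Qed.

Lemma cvg_const (c : R) : Un_cv (fun _ => c) c.
Proof. by move=> eps eps_gt0; exists 0%N => k _; rewrite !RealsE subrr normr0. Qed.

Lemma cvg_even_odd (u : nat -> R) l :
  Un_cv (fun m => u m.*2) l -> Un_cv (fun m => u m.*2.+1) l -> Un_cv u l.
Proof.
move=> cv_even cv_odd eps eps_gt0.
have [N1 HN1] := cv_even eps eps_gt0; have [N2 HN2] := cv_odd eps eps_gt0.
exists (N1 + N2).*2 => k /leP; rewrite -geq_half_double => lek.
by rewrite -(odd_double_half k); case: (odd k); [apply: HN2 | apply: HN1]; apply/leP; lia.
Qed.

Lemma sum_expmi_re_double x m :
  sum_f_R0 (expmi_re x) m.*2 = sum_f_R0 (fun i => cos_n i * (x ^+ 2) ^+ i) m.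
Proof.
elim: m => [|m IH] /=; first exact: expmi_re_double x 0.
by rewrite IH expmi_re_doubleS -doubleS expmi_re_double !RealsE addr0.
Qed.

Lemma sum_expmi_im_doubleS x m :
  sum_f_R0 (expmi_im x) m.*2.+1 = - x * sum_f_R0 (fun i => sin_n i * (x ^+ 2) ^+ i) m.
Proof.
elim: m => [|m IH]; first by rewrite /= (expmi_im_double x 0) (expmi_im_doubleS x 0) !RealsE add0r.
by rewrite doubleS tech5 tech5 IH tech5 -doubleS expmi_im_double expmi_im_doubleS !RealsE addr0; ring.
Qed.

Lemma cos_series x : Un_cv (sum_f_R0 (fun i => cos_n i * (x ^+ 2) ^+ i)) (cos x).
Proof.
rewrite /cos; case: exist_cos => c; apply: Un_cv_ext => m.
by apply: PartSum.sum_eq => i _; rewrite /Rsqr !RealsE expr2.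
Qed.

Lemma sin_series x : Un_cv (fun m => - x * sum_f_R0 (fun i => sin_n i * (x ^+ 2) ^+ i) m) (- sin x).
Proof.
rewrite /sin; case: exist_sin => s cv_s; rewrite !RealsE -mulNr.
apply: CV_mult (cvg_const _) _; apply: Un_cv_ext cv_s => m.
by apply: PartSum.sum_eq => i _; rewrite /Rsqr !RealsE expr2.
Qed.

Lemma cvg_expmi_re x : Un_cv (sum_f_R0 (expmi_re x)) (cos x).
Proof.
apply: cvg_even_odd; apply: Un_cv_ext (cos_series x) => m.
  by rewrite sum_expmi_re_double.
by rewrite tech5 expmi_re_doubleS sum_expmi_re_double !RealsE addr0.
Qed.

Lemma cvg_expmi_im x : Un_cv (sum_f_R0 (expmi_im x)) (- sin x).
Proof.
apply: cvg_even_odd; last by apply: Un_cv_ext (sin_series x) => m; rewrite sum_expmi_im_doubleS.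
apply: (CV_shift _ 1); apply: Un_cv_ext (sin_series x) => m.
by rewrite -addnE addn1 doubleS tech5 -doubleS expmi_im_double sum_expmi_im_doubleS !RealsE addr0.
Qed.

Lemma cvg_bigsum (J : Type) (r : seq J) (F : J -> nat -> R) (l : J -> R) :
  (forall j, Un_cv (F j) (l j)) -> Un_cv (fun N => \sum_(j <- r) F j N) (\sum_(j <- r) l j).
Proof.
move=> cvF; elim: r => [|j r IH].
  by rewrite big_nil; apply: Un_cv_ext (cvg_const 0) => N; rewrite big_nil.
rewrite big_cons; apply: Un_cv_ext (CV_plus _ _ _ _ (cvF j) IH) => N.
by rewrite big_cons.
Qed.

Section Spectral.

Variables (T I : finType) (A : adjmx T) (X : I -> T -> R) (lam : I -> R).
Hypothesis X_eigen : forall j v, \sum_w X j w * (A w v)%:R = lam j * X j v.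
Hypothesis X_complete : forall u v, \sum_j X j u * X j v = (u == v)%:R.

Lemma mxpow_spectral k u v : (mxpow A k u v)%:R = \sum_j lam j ^+ k * (X j u * X j v).
Proof.
elim: k v => [|k IH] v.
  rewrite -[mxpow _ _ _ _]/(nat_of_bool _) -X_complete.
  by apply: eq_bigr => j _; rewrite expr0 mul1r.
rewrite -[mxpow _ _ _ _]/(\sum_w mxpow A k u w * A w v)%N natr_sum.
under eq_bigr do rewrite natrM IH mulr_suml.
rewrite exchange_big /=; apply: eq_bigr => j _.
have -> : \sum_w lam j ^+ k * (X j u * X j w) * (A w v)%:R =
          lam j ^+ k * X j u * \sum_w X j w * (A w v)%:R.
  by rewrite mulr_sumr; apply: eq_bigr => w _; ring.
by rewrite X_eigen exprS; ring.
Qed.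

Lemma exp_term_re t u v k :
  (exp_term A t u v k).1 = \sum_j X j u * X j v * expmi_re (t * lam j) k.
Proof.
rewrite /exp_term CmulE /= !RealsE mxpow_spectral mulr0 subr0 mulr_sumr mulr_suml mulr_sumr.
by apply: eq_bigr => j _; rewrite /expmi_re exprMn; ring.
Qed.

Lemma exp_term_im t u v k :
  (exp_term A t u v k).2 = \sum_j X j u * X j v * expmi_im (t * lam j) k.
Proof.
rewrite /exp_term CmulE /= !RealsE mxpow_spectral mulr0 add0r mulr_sumr mulr_suml mulr_sumr.
by apply: eq_bigr => j _; rewrite /expmi_im exprMn; ring.
Qed.

Lemma transition_entry_spectral t u v :
  transition_entry A t u v
    (\sum_j X j u * X j v * cos (t * lam j), \sum_j X j u * X j v * - sin (t * lam j)).
Proof.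
split.
- apply: Un_cv_ext (cvg_bigsum _ (fun j => CV_mult _ _ _ _ (cvg_const (X j u * X j v))
                                            (cvg_expmi_re (t * lam j)))) => N.
  rewrite !RealsE; under [RHS]eq_bigr do rewrite exp_term_re.
  by rewrite exchange_big; apply: eq_bigr => j _; rewrite !RealsE mulr_sumr.
- apply: Un_cv_ext (cvg_bigsum _ (fun j => CV_mult _ _ _ _ (cvg_const (X j u * X j v))
                                            (cvg_expmi_im (t * lam j)))) => N.
  rewrite !RealsE; under [RHS]eq_bigr do rewrite exp_term_im.
  by rewrite exchange_big; apply: eq_bigr => j _; rewrite !RealsE mulr_sumr.
Qed.

Lemma transition_entry_id t u v :
  (forall j, cos (t * lam j) = 1 /\ sin (t * lam j) = 0) ->
  transition_entry A t u v (INR (u == v), R0).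
Proof.
move=> trig_t; have := transition_entry_spectral t u v.
congr transition_entry; congr pair.
  by rewrite INRE -X_complete; apply: eq_bigr => j _; rewrite (trig_t j).1 mulr1.
by rewrite big1 // => j _; rewrite (trig_t j).2 oppr0 mulr0.
Qed.

End Spectral.

Definition neps_vec n (T I : finType) (X : I -> T -> R) (J : {ffun 'I_n -> I})
  (u : {ffun 'I_n -> T}) := \prod_(i < n) X (J i) (u i).

Definition neps_val n (I : finType) (mu : I -> R) (Om : {set {ffun 'I_n -> bool}})
  (J : {ffun 'I_n -> I}) := \sum_(beta in Om) \prod_(i < n) (if beta i then mu (J i) else 1).

Section Neps.

Variables (T I : finType) (A : adjmx T) (X : I -> T -> R) (mu : I -> R).
Hypothesis X_eigen : forall j v, \sum_w X j w * (A w v)%:R = mu j * X j v.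
Hypothesis X_complete : forall u v, \sum_j X j u * X j v = (u == v)%:R.

Lemma adj_pow01_eigen (b : bool) j v :
  \sum_w X j w * (adj_pow01 A b w v)%:R = (if b then mu j else 1) * X j v.
Proof.
case: b; first exact: X_eigen.
rewrite mul1r (bigD1 v) //= eqxx mulr1 big1 ?addr0 // => w /negbTE w_neq_v.
by rewrite /adj_pow01 w_neq_v mulr0.
Qed.

Variables (n : nat) (Om : {set {ffun 'I_n -> bool}}).

Lemma neps_eigen J v :
  \sum_w neps_vec X J w * (neps_adj A Om w v)%:R = neps_val mu Om J * neps_vec X J v.
Proof.
rewrite /neps_val mulr_suml.
under eq_bigr do rewrite /neps_adj natr_sum mulr_sumr.
rewrite exchange_big /=; apply: eq_bigr => beta _.
under eq_bigr do rewrite natr_prod /neps_vec -big_split /=.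
rewrite -(bigA_distr_bigA (fun i w => X (J i) w * (adj_pow01 A (beta i) w (v i))%:R)) /=.
by under eq_bigr do rewrite adj_pow01_eigen; rewrite big_split.
Qed.

Lemma neps_complete u v :
  \sum_(J : {ffun 'I_n -> I}) neps_vec X J u * neps_vec X J v = (u == v)%:R.
Proof.
under eq_bigr do rewrite /neps_vec -big_split /=.
rewrite -(bigA_distr_bigA (fun i j => X j (u i) * X j (v i))) /=.
under eq_bigr do rewrite X_complete.
have [->|u_neq_v] := eqVneq u v; first by rewrite big1 // => i _; rewrite eqxx.
have [i ui_neq_vi] : exists i, u i != v i.
  apply/existsP; apply: contraR u_neq_v; rewrite negb_exists => /forallP eq_uv.
  by apply/eqP/ffunP => i; apply/eqP/negPn.
by rewrite (bigD1 i) //= (negbTE ui_neq_vi) mul0r.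
Qed.

End Neps.

Local Notation sqrt2 := (@Num.sqrt R 2).

Lemma sqrt2_mul_sqrt2 : sqrt2 * sqrt2 = 2.
Proof. by rewrite -expr2 sqr_sqrtr ?ler0n. Qed.

Definition p3_vec (j a : 'I_3) :=
  nth 0 (nth [::] [:: [:: 1/2; sqrt2/2; 1/2];
                      [:: sqrt2/2; 0; -(sqrt2/2)];
                      [:: 1/2; -(sqrt2/2); 1/2]] j) a.

Definition p3_val (j : 'I_3) := nth 0 [:: sqrt2; 0; - sqrt2] j.

Lemma p3_eigen j v : \sum_w p3_vec j w * (P3_adj w v)%:R = p3_val j * p3_vec j v.
Proof.
have sqrt2_sq := sqrt2_mul_sqrt2; rewrite !big_ord_recl big_ord0.
by case: j => [[|[|[|j]]] ?] //; case: v => [[|[|[|v]]] ?] //; rewrite /p3_vec /p3_val /P3_adj /=; nra.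
Qed.

Lemma p3_complete a c : \sum_j p3_vec j a * p3_vec j c = (a == c)%:R.
Proof.
have sqrt2_sq := sqrt2_mul_sqrt2; rewrite !big_ord_recl big_ord0.
by case: a => [[|[|[|a]]] ?] //; case: c => [[|[|[|c]]] ?] //; rewrite /p3_vec /=; nra.
Qed.

Lemma p3_valE j : p3_val j = sqrt2 * (1 - (j : nat)%:Z)%:~R.
Proof. by case: j => [[|[|[|j]]] ?] //; rewrite /p3_val /=; ring. Qed.

Lemma prod_p3_val n (beta : {ffun 'I_n -> bool}) (J : {ffun 'I_n -> 'I_3}) :
  \prod_(i < n) (if beta i then p3_val (J i) else 1) =
  sqrt2 ^+ hamming_weight beta * (\prod_(i | beta i) (1 - (J i : nat)%:Z))%:~R.
Proof.
rewrite -big_mkcond /=; under eq_bigr do rewrite p3_valE.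
by rewrite big_split /= prodr_const rmorph_prod /hamming_weight cardsE.
Qed.

Lemma hamming_weight_gt0 n (beta : {ffun 'I_n -> bool}) :
  beta != [ffun _ => false] -> (0 < hamming_weight beta)%N.
Proof.
move=> beta_neq0; rewrite /hamming_weight card_gt0; apply/set0Pn.
have [i beta_i] : exists i, beta i.
  apply/existsP; apply: contraR beta_neq0; rewrite negb_exists => /forallP beta0.
  by apply/eqP/ffunP => i; rewrite ffunE; apply/negbTE.
by exists i; rewrite inE.
Qed.

Lemma neps_val_p3_even n (Om : {set {ffun 'I_n -> bool}}) J :
  [ffun _ => false] \notin Om ->
  (forall beta, beta \in Om -> ~~ odd (hamming_weight beta)) ->
  exists z : int, neps_val p3_val Om J = 2 * z%:~R.
Proof.
move=> Om0 Om_even; rewrite /neps_val.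
apply: (big_ind (fun x => exists z : int, x = 2 * z%:~R)).
- by exists 0; rewrite mulr0.
- by move=> _ _ [a ->] [b ->]; exists (a + b); rewrite intrD mulrDr.
move=> beta beta_Om; rewrite prod_p3_val.
have hw_gt0 : (0 < hamming_weight beta)%N.
  by apply: hamming_weight_gt0; apply: contraNneq Om0 => <-.
have [m ->] : exists m, hamming_weight beta = m.+1.*2.
  have := odd_double_half (hamming_weight beta); rewrite (negbTE (Om_even _ beta_Om)) add0n.
  case: (hamming_weight beta)./2 => [|m] hw_eq; last by exists m.
  by move: hw_gt0; rewrite -hw_eq.
rewrite -mul2n exprM sqr_sqrtr ?ler0n // exprS.
exists (2 ^+ m * \prod_(i | beta i) (1 - (J i : nat)%:Z)).
by rewrite rmorphM rmorphXn /= mulrA.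
Qed.

(* The arguments of [cos] and [sin] are parsed in R_scope: the products below are [Rmult]. *)
Lemma sin_PI_intmul (z : int) : sin (PI * z%:~R) = 0.
Proof.
have sin_PI_natmul k : sin (PI * k%:R) = 0.
  by apply: sin_eq_0_1; exists (Z.of_nat k); rewrite -INR_IZR_INZ INRE RmultE mulrC.
case: z => k; first exact: sin_PI_natmul.
by rewrite NegzE intrN RmultE mulrN -RoppE sin_neg -RmultE sin_PI_natmul RoppE oppr0.
Qed.

Lemma cos_sin_PI_even (z : int) :
  cos (PI * (2 * z%:~R)) = 1 /\ sin (PI * (2 * z%:~R)) = 0.
Proof.
rewrite -Rmult_assoc (Rmult_comm PI) Rmult_assoc cos_2a_sin sin_2a sin_PI_intmul.
by rewrite !RealsE !(mulr0, mul0r) subr0.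
Qed.

Theorem corollary3p5 (n : nat) (Om : {set {ffun 'I_n -> bool}}) :
  Om != set0 ->
  [ffun _ => false] \notin Om ->
  (forall beta, beta \in Om -> ~~ odd (hamming_weight beta)) ->
  (forall u v : {ffun 'I_n -> 'I_3},
     transition_entry (neps_adj P3_adj Om) PI u v
       (INR (nat_of_bool (u == v)), R0)) /\
  periodic_at (neps_adj P3_adj Om) PI.
Proof.
move=> _ Om0 Om_even.
have H_PI_id u v : transition_entry (neps_adj P3_adj Om) PI u v (INR (u == v), R0).
  apply: (transition_entry_id (neps_eigen p3_eigen Om) (neps_complete p3_complete (n:=n))) => J.
  by have [z ->] := neps_val_p3_even J Om0 Om_even; apply: cos_sin_PI_even.
split=> //; split; first exact: PI_neq0.
exists (R1, R0); split; first by rewrite /Cnorm2 /= !RealsE mulr1 mulr0 addr0.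
move=> u v; rewrite CmulE /= (_ : R1 = 1) // (_ : R0 = 0) //.
by rewrite mul1r !mul0r mulr0 subr0 addr0; apply: H_PI_id.
Qed.
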